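(* Let $H$ be a real Hilbert space, $r_0>0$ and $\mathcal{V}:(0,r_0]\rightrightarrows H$ a set-valued mapping with nonempty values. Assume that for each $r\in(0,r_0]$ there exist $\epsilon_r\in(0,r)$ and an absolutely continuous curve $\theta_r:(r-\epsilon_r,r]\to H$ such that $\theta_r(s)\in\mathcal{V}(s)$ for all $s\in(r-\epsilon_r,r]$. Then there exist a countable partition $\{I_n\}_{n\in\mathbb{N}}$ of $(0,r_0]$ into intervals with nonempty interior and a map $\theta:(0,r_0]\to H$ with $\theta(r)\in\mathcal{V}(r)$ for all $r\in(0,r_0]$ such that $\theta$ is absolutely continuous on each $I_n$. *)

From HB Require Import structures.
From mathcomp Require Import all_boot all_order all_algebra.
From mathcomp Require Import all_classical all_reals all_analysis.
Set Implicit Arguments. Unset Strict Implicit. Unset Printing Implicit Defensive.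
Import Order.TTheory GRing.Theory Num.Theory.
Import numFieldNormedType.Exports.
Local Open Scope classical_set_scope.
Local Open Scope ring_scope.

Definition is_inner_product (R : realType) (H : normedModType R)
  (inner : H -> H -> R) : Prop :=
  [/\ forall x y, inner x y = inner y x,
      forall a x y z, inner (a *: x + y) z = a * inner x z + inner y z
    & forall x, `|x| ^+ 2 = inner x x].

Definition abs_cont_on (R : realType) (H : normedModType R)
  (I : set R) (f : R -> H) : Prop :=
  forall eps : R, 0 < eps -> exists2 delta : R, 0 < delta &
    forall (n : nat) (a b : 'I_n -> R),
      (forall k, I (a k) /\ I (b k) /\ a k <= b k) ->
      (forall k l, k != l -> b k <= a l \/ b l <= a k) ->
      \sum_(k < n) (b k - a k) < delta ->
      \sum_(k < n) `|f (b k) - f (a k)| < eps.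

From HB Require Import structures.
From mathcomp Require Import all_boot all_order all_algebra.
From mathcomp Require Import all_classical all_reals all_analysis.
From mathcomp Require Import lra.
Import Order.TTheory GRing.Theory Num.Theory.
Import numFieldNormedType.Exports.
Local Open Scope classical_set_scope.
Local Open Scope ring_scope.

(** Call a pair [a < b] in ]0, r0] a tile when [Vm] has an absolutely
  continuous selection on ]a, b]. By Zorn's lemma there is a maximal family
  of pairwise disjoint tiles whose union is an up-set of ]0, r0]. That union
  is all of ]0, r0]: otherwise the supremum [t] of the uncovered points is
  itself uncovered while everything above it is covered, and the local
  selection at [t] yields a tile ]t - eps, t] that can be added to the family.
  Disjoint nondegenerate intervals are countably many, and the tiles are
  infinitely many since each left endpoint lies in a tile further left;
  enumerating them gives the partition, on which the selection is glued. *)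

Lemma abs_cont_on_sub_eq {R : realType} {H : normedModType R} {I J : set R}
    {f g : R -> H} :
  I `<=` J -> {in I, f =1 g} -> abs_cont_on J g -> abs_cont_on I f.
Proof.
move=> IJ fg acg eps eps_gt0; have [d d_gt0 hd] := acg eps eps_gt0.
exists d => // n a b abI disj len_lt.
rewrite (eq_bigr (fun k => `|g (b k) - g (a k)|)); last first.
  by move=> k _; have [aI [bI _]] := abI k; rewrite !fg ?inE.
apply: hd => // k; have [aI [bI ab]] := abI k; split; [exact: IJ|split=> //].
exact: IJ.
Qed.

Lemma infinite_set_descending {T : Type} {d : Order.disp_t} {U : porderType d}
    {A : set T} (key : T -> U) :
  A !=set0 -> (forall p, A p -> exists2 q, A q & (key q < key p)%O) ->
  infinite_set A.
Proof.
move=> [p0 Ap0] descA finA.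
have /choice[next hnext] :
    forall p, exists q, A p -> A q /\ (key q < key p)%O.
  move=> p; have [Ap|nAp] := pselect (A p); last by exists p.
  by have [q Aq lt_qp] := descA p Ap; exists q.
pose s n := iter n next p0.
have sA n : A (s n) by elim: n => [|n IHn] //=; exact: (hnext _ IHn).1.
have key_decr m n : (m < n)%N -> (key (s n) < key (s m))%O.
  elim: n => [//|n IHn]; rewrite ltnS leq_eqVlt => /orP[/eqP <-|lt_mn].
    exact: (hnext _ (sA m)).2.
  exact: lt_trans (hnext _ (sA n)).2 (IHn lt_mn).
have s_inj : injective s.
  move=> m n e; case: (ltngtP m n) => // lt; have := key_decr _ _ lt;
    by rewrite e ltxx.
apply: infinite_nat; rewrite (_ : [set: nat] = s @^-1` A).
  by apply: finite_preimage => // m n _ _; exact: s_inj.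
by apply/seteqP; split=> // n _; exact: sA.
Qed.

Lemma countably_infinite_enum {T : pointedType} {A : set T} :
  countable A -> infinite_set A ->
  exists en : nat -> T,
    [/\ injective en, forall n, A (en n) & forall p, A p -> exists n, en n = p].
Proof.
move=> cntA infA; have /card_esym/card_set_bijP[en [enA en_inj en_surj]] :=
  eq_card_nat cntA infA.
exists en; split => [m n|n|p Ap]; first by apply: en_inj; rewrite inE.
  exact: enA.
by have [n _ <-] := en_surj p Ap; exists n.
Qed.

Section HalfOpenIntervals.
Context {R : realType}.
Implicit Types (A : set (R * R)) (p q : R * R) (x y : R).

(* A pair [p] stands for the half-open interval ]p.1, p.2]. *)
Definition covered A x := exists2 p, A p & p.1 < x <= p.2.

Definition pairwise_disjoint_itv A :=
  forall p q, A p -> A q -> p <> q -> p.2 <= q.1 \/ q.2 <= p.1.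

Lemma pairwise_disjoint_itv_eq {A p q x} : pairwise_disjoint_itv A ->
  A p -> A q -> p.1 < x <= p.2 -> q.1 < x <= q.2 -> p = q.
Proof.
move=> disjA Ap Aq /andP[px xp] /andP[qx xq].
case: (eqVneq p q) => [//|/eqP neq].
by exfalso; case: (disjA _ _ Ap Aq neq); lra.
Qed.

Lemma countable_pairwise_disjoint_itv A : pairwise_disjoint_itv A ->
  (forall p, A p -> p.1 < p.2) -> countable A.
Proof.
move=> disjA ltA.
have /choice[rat_in hrat] :
    forall p, exists r : rat, p.1 < p.2 -> ratr r \in `]p.1, p.2[.
  move=> p; have [lt_p|le_p] := ltP p.1 p.2; last by exists 0 => ?; lra.
  by have [r hr] := rat_in_itvoo lt_p; exists r.
apply/countable_injP; exists (fun p => pickle (rat_in p)).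
move=> p q /set_mem Ap /set_mem Aq /(pcan_inj pickleK) eq_rat.
have := hrat p (ltA p Ap); have := hrat q (ltA q Aq).
rewrite eq_rat !in_itv /= => /andP[? ?] /andP[? ?].
by apply: (pairwise_disjoint_itv_eq (x := ratr (rat_in q)) disjA Ap Aq);
  apply/andP; split; lra.
Qed.

Lemma enum_itv_partition {r0 : R} {A} : 0 < r0 -> pairwise_disjoint_itv A ->
  (forall p, A p -> [/\ 0 < p.1, p.1 < p.2 & p.2 <= r0]) ->
  (forall x, 0 < x <= r0 -> covered A x) ->
  exists en : nat -> R * R, [/\ forall n, A (en n),
    forall n m, n <> m ->
      [set` `](en n).1, (en n).2]] `&` [set` `](en m).1, (en m).2]] = set0
    & \bigcup_n [set` `](en n).1, (en n).2]] = [set` `]0, r0]]].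
Proof.
move=> r0_gt0 disjA itvA coverA.
have infA : infinite_set A.
  apply: (infinite_set_descending fst).
    by have [p Ap _] := coverA r0 (introT andP (conj r0_gt0 (lexx r0))); exists p.
  move=> p /itvA[p1_gt0 p12 p2r0].
  have [|q Aq /andP[qp1 _]] := coverA p.1; last by exists q.
  by apply/andP; split; lra.
have cntA : countable A.
  by apply: countable_pairwise_disjoint_itv disjA _ => p /itvA[].
have [en [en_inj enA en_surj]] := countably_infinite_enum cntA infA.
exists en; split => // [n m nm|].
  apply/seteqP; split => // x [/=]; rewrite !in_itv /= => xn xm.
  by apply: nm; apply: en_inj; exact: pairwise_disjoint_itv_eq disjA _ _ xn xm.
apply/seteqP; split => x /=; rewrite in_itv /=.
  move=> [n _ /=]; rewrite in_itv /= => /andP[? ?].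
  by have [? ? ?] := itvA _ (enA n); apply/andP; lra.
move=> /coverA[p Ap px]; have [n enp] := en_surj p Ap.
by exists n => //=; rewrite in_itv /= enp.
Qed.

End HalfOpenIntervals.

Section Tiling.
Variables (R : realType) (r0 : R) (Q : R -> R -> Prop).
Implicit Types (A : set (R * R)) (p q : R * R) (x y : R).

Definition tile p := [/\ 0 < p.1, p.1 < p.2, p.2 <= r0 & Q p.1 p.2].

(* The up-set condition makes the uncovered points an initial segment. *)
Definition partial_tiling A := [/\ A `<=` tile, pairwise_disjoint_itv A &
  forall x y, covered A x -> x <= y <= r0 -> covered A y].

Lemma partial_tiling_bigcup (F : set (set (R * R))) :
  F `<=` partial_tiling -> total_on F subset ->
  partial_tiling (\bigcup_(A in F) A).
Proof.
move=> Ftiling Ftot; split.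
- by move=> p [A FA Ap]; have [+ _ _] := Ftiling A FA; apply.
- move=> p q [A FA Ap] [B FB Bq] neq.
  have [AB|BA] := Ftot A B FA FB.
    by have [_ + _] := Ftiling B FB; apply => //; exact: AB.
  by have [_ + _] := Ftiling A FA; apply => //; exact: BA.
- move=> x y [p [A FA Ap] px] xy; have [_ _ upA] := Ftiling A FA.
  have [|q Aq qy] := upA x y _ xy; first by exists p.
  by exists q => //; exists A.
Qed.

Hypothesis local_tile : forall r, 0 < r <= r0 -> exists2 a, 0 < a < r & Q a r.

Section Extension.
Variables (A : set (R * R)) (x0 : R).
Hypotheses (tA : partial_tiling A) (x0_itv : 0 < x0 <= r0)
  (x0_uncovered : ~ covered A x0).

Let uncovered := [set x | 0 < x <= r0 /\ ~ covered A x].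
Let t := sup uncovered.

Let has_sup_uncovered : has_sup uncovered.
Proof. by split; [exists x0 | exists r0 => y [/andP[_ ->]]]. Qed.

Let t_gt0 : 0 < t.
Proof.
have := sup_upper_bound has_sup_uncovered (conj x0_itv x0_uncovered).
by case/andP: x0_itv => x0_gt0 _; rewrite -/t; lra.
Qed.

Let t_le_r0 : t <= r0.
Proof. by apply: ge_sup; [exists x0 | move=> y [/andP[_ ->]]]. Qed.

Let t_uncovered : ~ covered A t.
Proof.
move=> [p Ap /andP[pt tp]].
have t_p1_gt0 : 0 < t - p.1 by rewrite subr_gt0.
have [c unc_c tc] := sup_adherent t_p1_gt0 has_sup_uncovered.
have ct : c <= t := sup_upper_bound has_sup_uncovered unc_c.
case: unc_c => _ c_unc.
by apply: c_unc; exists p => //; apply/andP; split; rewrite -/t in tc; lra.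
Qed.

Let covered_gt_t y : covered A y -> t < y.
Proof.
move=> Ay; rewrite ltNge; apply/negP => yt; apply: t_uncovered.
by have [_ _ upA] := tA; apply: upA Ay _; apply/andP.
Qed.

Let covered_above_t y : t < y <= r0 -> covered A y.
Proof.
move=> /andP[ty yr0]; apply: contrapT => y_unc.
have : y <= t.
  apply: (sup_upper_bound has_sup_uncovered); split=> //.
  by have t0 := t_gt0; apply/andP; split; lra.
by rewrite leNgt ty.
Qed.

Lemma partial_tiling_extend : exists q, ~ A q /\ partial_tiling (A `|` [set q]).
Proof.
have [tA_tile tA_disj _] := tA.
have [a /andP[a_gt0 at_] Qat] := local_tile t (introT andP (conj t_gt0 t_le_r0)).
have t_le_left p : A p -> t <= p.1.
  move=> Ap; have [p1_gt0 p12 _ _] := tA_tile p Ap.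
  have tp2 : t < p.2 by apply: covered_gt_t; exists p => //; apply/andP.
  rewrite leNgt; apply/negP => p1t; apply: t_uncovered.
  by exists p => //; apply/andP; split => //; exact: ltW.
exists (a, t); split.
  by move=> Aat; apply: t_uncovered; exists (a, t) => //=; apply/andP.
split.
- by move=> p [/tA_tile //|->].
- move=> p q [Ap|->] [Aq|->] neq; first exact: tA_disj.
  + by right; exact: t_le_left.
  + by left; exact: t_le_left.
  + by case: neq.
- move=> x y [p [Ap|->] px] /andP[xy yr0].
    have tx : t < x by apply: covered_gt_t; exists p.
    have [|q Aq qy] := covered_above_t y; first by apply/andP; split; lra.
    by exists q => //; left.
  have [ty|yt] := ltP t y.
    by have [|q Aq qy] := covered_above_t y; [apply/andP | exists q => //; left].
  by exists (a, t); [right | move: px => /= /andP[? ?]; apply/andP; split; lra].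
Qed.

End Extension.

Lemma exists_tiling :
  exists A, partial_tiling A /\ forall x, 0 < x <= r0 -> covered A x.
Proof.
have [A [tA Amax]] := Zorn_bigcup partial_tiling_bigcup.
exists A; split=> // x x_itv; apply: contrapT => x_unc.
have [q [nAq tAq]] := partial_tiling_extend A x tA x_itv x_unc.
apply: Amax tAq; split; first by move=> p Ap; left.
by move=> AqA; apply: nAq; exact: AqA _ (or_intror erefl).
Qed.

End Tiling.

Arguments exists_tiling {R r0 Q}.

Section Gluing.
Context {R : realType} {H : normedModType R} (Vm : R -> set H).

Definition ac_selection a b := exists2 th : R -> H,
  abs_cont_on [set` `]a, b]] th & forall s, a < s <= b -> Vm s (th s).

Lemma glue_ac_selections {A : set (R * R)} :
  (forall p, A p -> ac_selection p.1 p.2) -> pairwise_disjoint_itv A ->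
  exists theta : R -> H, (forall x, covered A x -> Vm x (theta x)) /\
    forall p, A p -> abs_cont_on [set` `]p.1, p.2]] theta.
Proof.
move=> selA disjA.
have /choice[th hth] : forall p, exists th : R -> H, A p ->
    abs_cont_on [set` `]p.1, p.2]] th /\ forall s, p.1 < s <= p.2 -> Vm s (th s).
  move=> p; have [Ap|nAp] := pselect (A p); last by exists (fun=> 0).
  by have [th ac sel] := selA p Ap; exists th.
have /choice[tile_of htile] :
    forall x, exists p, covered A x -> A p /\ p.1 < x <= p.2.
  move=> x; have [[p Ap px]|nx] := pselect (covered A x); last by exists (0, 0).
  by exists p.
exists (fun x => th (tile_of x) x); split.
  by move=> x /htile[Ap px]; exact: (hth _ Ap).2.
move=> p Ap; apply: (abs_cont_on_sub_eq _ _ (hth _ Ap).1) => // x.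
rewrite inE /= in_itv /= => px.
have [Aq qx] := htile x (ex_intro2 _ _ p Ap px).
by rewrite (pairwise_disjoint_itv_eq disjA Aq Ap qx px).
Qed.

End Gluing.

Theorem proposition5p7 (R : realType) (H : completeNormedModType R)
  (inner : H -> H -> R) (hinner : is_inner_product inner)
  (r0 : R) (hr0 : 0 < r0) (Vm : R -> set H)
  (hne : forall r : R, 0 < r <= r0 -> Vm r !=set0)
  (hloc : forall r : R, 0 < r <= r0 ->
     exists eps : R, exists theta_r : R -> H,
       [/\ 0 < eps, eps < r,
           abs_cont_on [set` `]r - eps, r]] theta_r
         & forall s : R, r - eps < s <= r -> Vm s (theta_r s)]) :
  exists (I : nat -> set R) (theta : R -> H),
    (forall n, is_interval (I n)) /\
    (forall n, (I n)° !=set0) /\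
    (forall n m, n <> m -> I n `&` I m = set0) /\
    \bigcup_n I n = [set` `]0, r0]] /\
    (forall r : R, 0 < r <= r0 -> Vm r (theta r)) /\
    (forall n, abs_cont_on (I n) theta).
Proof.
have local_tile r : 0 < r <= r0 -> exists2 a, 0 < a < r & ac_selection Vm a r.
  move=> r_itv; have [eps [th [eps_gt0 eps_lt ac sel]]] := hloc r r_itv.
  by exists (r - eps); [apply/andP; split; lra | exists th].
have [A [[tileA disjA _] coverA]] := exists_tiling local_tile.
have itvA p : A p -> [/\ 0 < p.1, p.1 < p.2 & p.2 <= r0] by move=> /tileA[].
have [en [enA en_disj en_cover]] := enum_itv_partition hr0 disjA itvA coverA.
have selA p : A p -> ac_selection Vm p.1 p.2 by move=> /tileA[].
have [theta [theta_sel theta_ac]] := glue_ac_selections Vm selA disjA.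
exists (fun n => [set` `](en n).1, (en n).2]]), theta.
split; [|split; [|split; [|split; [|split]]]].
- by move=> n; exact: interval_is_interval.
- move=> n; rewrite interior_itv_bnd; have [_ ? _] := itvA _ (enA n).
  by exists (((en n).1 + (en n).2) / 2); rewrite /= in_itv /=; apply/andP; lra.
- exact: en_disj.
- exact: en_cover.
- by move=> r /coverA; exact: theta_sel.
- by move=> n; exact: theta_ac.
Qed.
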